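(* Let $\mathbf{R}=(\mathbf{R}^{\Rightarrow},\mathbf{R}^{\mathrm{o}})$ and let $M$ be an $\mathbf{R}$-ordered model. For every Boolean formula $A$ and world $w_1$ of $M$: if $w_1\models A$, then $w_1\in\max_{\succeq_N}(\Vert A\Vert)$ or there exists $w_2$ with $w_2\succ_N w_1$ and $w_2\in\max_{\succeq_N}(\Vert A\Vert)$.
   Context: Boolean formulas over propositional letters; $\models_{\mathrm{PL}}$ classical entailment. $\mathbf{R}^{\Rightarrow}$ is a finite set of normality conditionals $A\Rightarrow B$ ($A,B$ Boolean; body $b=A$, head $h=B$) and $\mathbf{R}^{\mathrm{o}}$ a finite set of obligations $\bigcirc(B/A)$. For $X\subseteq\mathbf{R}^{\Rightarrow}$, $\mathrm{m}(X)=\{A\rightarrow B:A\Rightarrow B\in X\}$. Standing assumption (coherence): there is no nonempty $X\subseteq\mathbf{R}^{\Rightarrow}$ with $\mathrm{m}(X)\models_{\mathrm{PL}}\bigwedge_{r\in X}\neg b(r)$. LM-sequence: $\varepsilon(X)=\{A\Rightarrow B\in\mathbf{R}^{\Rightarrow}:\mathrm{m}(X)\models_{\mathrm{PL}}\neg A\}$, $\mathcal{E}_0=\mathbf{R}^{\Rightarrow}$, $\mathcal{E}_{i+1}=\varepsilon(\mathcal{E}_i)$; the order $m$ is the least $k$ with $\mathcal{E}_l=\mathcal{E}_k$ for all $l\geq k$, and $\mathcal{E}_\infty=\mathcal{E}_m$. Ranked partition: $\Delta_i=\mathcal{E}_i\setminus\mathcal{E}_{i+1}$ for $0\le i\le m-1$,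 $\Delta_m=\mathcal{E}_\infty$. For $X\subseteq\mathbf{R}^{\Rightarrow}$ let $\tau(X)=\langle|\Delta_{m-1}\cap X|,\ldots,|\Delta_0\cap X|\rangle$; $X\gtrsim Y$ iff $\tau(X)=\tau(Y)$ or, at the first coordinate where they differ, the entry of $\tau(X)$ is smaller. An $\mathbf{R}$-ordered model is $(W,\succeq_N,\succeq_I,v)$ with $W\neq\emptyset$, $v$ a valuation, $w_1\succeq_N w_2$ iff $F(w_1)\gtrsim F(w_2)$ where $F(w)=\{r\in\mathbf{R}^{\Rightarrow}:w\models b(r)\wedge\neg h(r)\}$ (and $\succeq_I$ the ideality ordering determined by $\mathbf{R}^{\mathrm{o}}$, irrelevant here). $w\succ_N u$ iff $w\succeq_N u$ and not $u\succeq_N w$. $\max_{\succeq_N}(X)=\{w\in X:\forall u\in X(u\succeq_N w\Rightarrow w\succeq_N u)\}$; $\Vert A\Vert$ = set of worlds where $A$ holds. *)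

From mathcomp Require Import all_boot.
From mathcomp Require Import boolp.
Set Implicit Arguments. Unset Strict Implicit. Unset Printing Implicit Defensive.

Inductive form : Type :=
| Var of nat
| Top
| Bot
| Neg of form
| And of form & form
| Or of form & form
| Imp of form & form.

Fixpoint eval (val : nat -> bool) (f : form) : bool :=
  match f with
  | Var n => val n
  | Top => true
  | Bot => false
  | Neg g => ~~ eval val g
  | And g h => eval val g && eval val h
  | Or g h => eval val g || eval val h
  | Imp g h => eval val g ==> eval val h
  end.

Definition entails (Gamma : form -> Prop) (phi : form) : Prop :=
  forall val : nat -> bool, (forall g, Gamma g -> eval val g) -> eval val phi.

Definition bigAnd (s : seq form) : form := foldr And Top s.

Section Conditionals.
(** The finite set R^=> of normality conditionals, given as a finite index
    type [I] with body/head maps (injective: it is a set of conditionals). *)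
Variables (I : finType) (body head : I -> form).

Definition mat (X : {set I}) : form -> Prop :=
  fun g => exists2 r, r \in X & g = Imp (body r) (head r).

Definition coherent : Prop :=
  forall X : {set I}, X != set0 ->
    ~ entails (mat X) (bigAnd [seq Neg (body r) | r <- enum X]).

Definition eps (X : {set I}) : {set I} :=
  [set r | asbool (entails (mat X) (Neg (body r)))].

Fixpoint LM (i : nat) : {set I} :=
  match i with 0 => setT | i.+1 => eps (LM i) end.

Definition is_order (m : nat) : Prop :=
  (forall l, m <= l -> LM l = LM m) /\
  (forall k, (forall l, k <= l -> LM l = LM k) -> m <= k).

(** Ranked partition Delta_i = E_i \ E_{i+1} (used for i < m). *)
Definition Delta (i : nat) : {set I} := LM i :\: LM i.+1.

(** tau(X) = <|Delta_{m-1} cap X|, ..., |Delta_0 cap X|>; coordinates are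
    read from index m-1 downwards.  X >~ Y iff tau(X) = tau(Y) or at the
    first differing coordinate (= highest differing rank i < m) tau(X) is
    smaller. *)
Definition cnt (X : {set I}) (i : nat) : nat := #|Delta i :&: X|.

Definition pref (m : nat) (X Y : {set I}) : Prop :=
  (forall i, i < m -> cnt X i = cnt Y i) \/
  (exists j, [/\ j < m, cnt X j < cnt Y j &
               forall i, j < i < m -> cnt X i = cnt Y i]).

Variables (m : nat) (W : Type) (v : W -> nat -> bool).

Definition falsified (w : W) : {set I} :=
  [set r | eval (v w) (body r) && ~~ eval (v w) (head r)].

Definition geN (w1 w2 : W) : Prop := pref m (falsified w1) (falsified w2).
Definition gtN (w1 w2 : W) : Prop := geN w1 w2 /\ ~ geN w2 w1.

Definition maxN (X : W -> Prop) : W -> Prop :=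
  fun w => X w /\ forall u, X u -> geN u w -> geN w u.

Definition ext (A : form) : W -> Prop := fun w => eval (v w) A.

End Conditionals.

(** The normality ordering compares worlds only through the counts of
    falsified conditionals in each rank, read lexicographically from the
    highest rank down, so it is a total preorder that takes only finitely
    many values (falsified sets are subsets of the finite set of
    conditionals).  Hence among the A-worlds there is a best one, [w2]:
    either [w1] is as good as [w2], and is then maximal itself, or [w2] is
    strictly better. *)

From mathcomp Require Import all_boot.
From mathcomp Require Import boolp.

Fixpoint lex_le (k : nat) (f g : nat -> nat) : bool :=
  if k is k'.+1 then (f k' < g k') || (f k' == g k') && lex_le k' f g
  else true.

Lemma lex_leP k f g :
  reflect ((forall i, i < k -> f i = g i) \/
           exists j, [/\ j < k, f j < g j & forall i, j < i < k -> f i = g i])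
          (lex_le k f g).
Proof.
elim: k => [|k IH] /=; first by apply: ReflectT; left.
apply: (iffP idP).
- case/orP=> [lt_k | /andP[/eqP eq_k /IH]].
    by right; exists k; split=> // i /andP[lt_ki]; rewrite ltnS leqNgt lt_ki.
  case=> [eq_lt | [j [lt_jk lt_j eq_gt]]].
    by left=> i; rewrite ltnS leq_eqVlt => /orP[/eqP -> | /eq_lt].
  right; exists j; split=> //; first exact: ltnW.
  move=> i /andP[lt_ji]; rewrite ltnS leq_eqVlt => /orP[/eqP -> // | lt_ik].
  by apply: eq_gt; rewrite lt_ji.
- case=> [eq_lt | [j [lt_jk lt_j eq_gt]]].
    rewrite eq_lt // eqxx ltnn /=; apply/IH; left=> i lt_ik.
    by apply: eq_lt; apply: ltnW.
  move: lt_jk; rewrite ltnS leq_eqVlt => /orP[/eqP eq_jk | lt_jk].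
    by rewrite -eq_jk lt_j.
  rewrite eq_gt ?lt_jk ?ltnSn // eqxx ltnn /=; apply/IH; right; exists j.
  by split=> // i /andP[lt_ji lt_ik]; apply: eq_gt; rewrite lt_ji ltnW.
Qed.

Lemma lex_le_total k : total (lex_le k).
Proof.
move=> f g; elim: k => [|k IH] //=.
by case: (ltngtP (f k) (g k)).
Qed.

Lemma lex_le_trans k : transitive (lex_le k).
Proof.
move=> g f h; elim: k => [|k IH] //=.
case/orP=> [lt_fg | /andP[/eqP eq_fg le_fg]];
  case/orP=> [lt_gh | /andP[/eqP eq_gh le_gh]].
- by rewrite (ltn_trans lt_fg lt_gh).
- by rewrite -eq_gh lt_fg.
- by rewrite eq_fg lt_gh.
- by rewrite eq_fg eq_gh eqxx (IH le_fg le_gh) orbT.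
Qed.

Lemma exists_least_image {W : Type} {T : finType} (le : rel T) (f : W -> T)
    (P : W -> Prop) (w1 : W) :
  total le -> transitive le -> P w1 ->
  exists2 w, P w & forall u, P u -> le (f w) (f u).
Proof.
move=> le_total le_trans Pw1.
pose S := [set x | `[< exists2 w, P w & f w = x >]].
have f_sort u : P u -> f u \in sort le (enum S).
  by move=> Pu; rewrite mem_sort mem_enum inE; apply/asboolP; exists u.
move: f_sort (f_sort w1 Pw1) (sort_sorted le_total (enum S)) (mem_sort le (enum S)).
case: (sort le (enum S)) => // x s f_sort _ /= x_path mem_s.
have : x \in S by rewrite -mem_enum -mem_s mem_head.
rewrite inE => /asboolP[w Pw fw_x]; subst x.
exists w => // u /f_sort; rewrite inE => /orP[/eqP -> | s_fu].
  by have /orP[] := le_total (f w) (f w).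
exact: (allP (order_path_min le_trans x_path)).
Qed.

Theorem proposition1 (I : finType) (body head : I -> form)
  (inj : forall r s, body r = body s -> head r = head s -> r = s)
  (coh : coherent body head)
  (m : nat) (hm : is_order body head m)
  (W : Type) (hW : inhabited W) (v : W -> nat -> bool)
  (A : form) (w1 : W) :
  eval (v w1) A ->
  maxN body head m v (ext v A) w1 \/
  exists w2, gtN body head m v w2 w1 /\ maxN body head m v (ext v A) w2.
Proof.
move=> Aw1.
pose F := falsified body head v.
pose le : rel {set I} := fun X Y => lex_le m (cnt body head X) (cnt body head Y).
have le_total : total le by move=> X Y; apply: lex_le_total.
have le_trans : transitive le by move=> Y X Z; apply: lex_le_trans.
have geNP u w : reflect (geN body head m v u w) (le (F u) (F w)) by exact: lex_leP.
have [w2 Aw2 w2_ge] : exists2 w2, ext v A w2 & forall u, ext v A u -> le (F w2) (F u).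
  exact: (exists_least_image le F (ext v A) w1 le_total le_trans Aw1).
have w2_max : maxN body head m v (ext v A) w2.
  by split=> // u Au _; apply/geNP/w2_ge.
have [le12 | not_le12] := boolP (le (F w1) (F w2)); [left | right].
  by split=> // u Au _; apply/geNP; exact: le_trans le12 (w2_ge u Au).
by exists w2; split=> //; split=> [|/geNP]; [apply/geNP/w2_ge | apply/negP].
Qed.
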